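(* Let $\kappa$ be a cardinal with $\kappa=\beth_\kappa$, let $\tau$ be a relational vocabulary with $|\tau|<\kappa$ and let $\beta$ be an ordinal. Then the relation between $\tau$-structures ''$M$ and $N$ are such that player II has a winning strategy in $EF^{1,c,\beta}_\kappa(M,N)$'' is transitive.
   Context: The game $EF^{1,c,\beta}_{\le\theta}(M,N)$ for a cardinal $\theta$: rounds $k=0,1,\dots$ with $\beta_{-1}=\beta$, $\pi_{-1}=\emptyset$; in round $k$, player I chooses an ordinal $\beta_k<\beta_{k-1}$ and a set $A_k$ of size $\le\theta$ contained in $M$ or in $N$; player II chooses $f_k:A_k\to\omega$; I chooses $n_k<\omega$; II must choose a partial isomorphism $\pi_k\supseteq\pi_{k-1}$ from $M$ to $N$ whose domain (if $A_k\subseteq M$), resp. range (if $A_k\subseteq N$), contains $f_k^{-1}(n_k)$. The play ends after the round in which $\beta_k=0$; II wins if she can always make her moves. The game $EF^{1,c,\beta}_\kappa(M,N)$: I first chooses a cardinal $\theta<\kappa$, then $EF^{1,c,\beta}_{\le\theta}(M,N)$ is played. *)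

From Stdlib Require Import Wellfounded List.
From Stdlib Require Fin.

Definition card_le (A B : Type) : Prop :=
  exists f : A -> B, forall x y, f x = f y -> x = y.
Definition card_lt (A B : Type) : Prop := card_le A B /\ ~ card_le B A.
Definition card_eq (A B : Type) : Prop :=
  exists f : A -> B, (forall x y, f x = f y -> x = y) /\ (forall y, exists x, f x = y).

Definition well_order (A : Type) (lt : A -> A -> Prop) : Prop :=
  well_founded lt /\
  (forall x y z, lt x y -> lt y z -> lt x z) /\
  (forall x y, lt x y \/ x = y \/ lt y x).

(* (K, lt) is a well-order of order type the initial ordinal of |K|,
   i.e. it represents the cardinal kappa = |K| as a von Neumann ordinal:
   no proper initial segment has cardinality |K|. *)
Definition initial_well_order (K : Type) (lt : K -> K -> Prop) : Prop :=
  well_order K lt /\ forall x : K, ~ card_le K {y : K | lt y x}.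

(* ---------- beth numbers by transfinite recursion ----------
   beth x  :=  nat + Sum_{y < x} P(beth y),
   so |beth x| = beth_{alpha} where alpha is the rank of x
   (beth_0 = aleph_0, beth_{a+1} = 2^{beth_a}, beth_l = sup_{a<l} beth_a). *)
Definition beth_step (K : Type) (lt : K -> K -> Prop) (x : K)
  (rec : forall y, lt y x -> Type) : Type :=
  (nat + { y : K & { H : lt y x & (rec y H -> Prop) } })%type.

Definition beth (K : Type) (lt : K -> K -> Prop) (wf : well_founded lt) : K -> Type :=
  Fix wf (fun _ => Type) (beth_step K lt).

(* beth indexed by the order type of (K, lt) itself *)
Definition beth_top (K : Type) (lt : K -> K -> Prop) (wf : well_founded lt) : Type :=
  (nat + { y : K & (beth K lt wf y -> Prop) })%type.

Record structure (Sym : Type) (ar : Sym -> nat) : Type := Structure {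
  carrier :> Type;
  rel : forall s : Sym, (Fin.t (ar s) -> carrier) -> Prop }.
Arguments carrier {Sym ar}.
Arguments rel {Sym ar}.

Section Game.
Context {Sym : Type} {ar : Sym -> nat}.

Definition partial_iso (M N : structure Sym ar) (p : M -> N -> Prop) : Prop :=
  (forall a b b', p a b -> p a b' -> b = b') /\
  (forall a a' b, p a b -> p a' b -> a = a') /\
  (forall (s : Sym) (a : Fin.t (ar s) -> M) (b : Fin.t (ar s) -> N),
      (forall i, p (a i) (b i)) -> (rel M s a <-> rel N s b)).

Context (M N : structure Sym ar).
Context (W : Type) (ltW : W -> W -> Prop) (beta : W).
Context (K : Type) (Theta : K -> Prop).   (* theta = |{x | Theta x}| *)

(* I's first move in a round: an ordinal and a set A_k contained in M or in N *)
Record IMove : Type := { ib : W; iA : ((M -> Prop) + (N -> Prop))%type }.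

Definition Adom (A : ((M -> Prop) + (N -> Prop))%type) : Type :=
  match A with inl A => {a : M | A a} | inr A => {b : N | A b} end.

Definition IRound : Type := (IMove * nat)%type.

(* A strategy of II, as a function of the previous moves of I
   (histories are listed latest round first). *)
Record IIStrategy : Type := {
  sf : list IRound -> forall m : IMove, Adom (iA m) -> nat;
  sp : list IRound -> forall m : IMove, (Adom (iA m) -> nat) -> nat -> (M -> N -> Prop) }.

Definition prev_beta (h : list IRound) : W :=
  match h with nil => beta | r :: _ => ib (fst r) end.

Definition prev_pi (s : IIStrategy) (h : list IRound) : M -> N -> Prop :=
  match h with
  | nil => fun _ _ => False
  | (m, n) :: h' => sp s h' m (sf s h' m) n
  end.

Definition legal_I (h : list IRound) (m : IMove) : Prop :=
  ltW (ib m) (prev_beta h) /\ card_le (Adom (iA m)) {x : K | Theta x}.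

Fixpoint legal_history (h : list IRound) : Prop :=
  match h with
  | nil => True
  | (m, _) :: h' => legal_history h' /\ legal_I h' m
  end.

Definition covers (A : ((M -> Prop) + (N -> Prop))%type)
  (f : Adom A -> nat) (n : nat) (p : M -> N -> Prop) : Prop :=
  match A as A0 return (Adom A0 -> nat) -> Prop with
  | inl A => fun f => forall (a : M) (H : A a), f (exist _ a H) = n -> exists b, p a b
  | inr A => fun f => forall (b : N) (H : A b), f (exist _ b H) = n -> exists a, p a b
  end f.

Definition winning_le_theta (s : IIStrategy) : Prop :=
  forall (h : list IRound) (m : IMove) (n : nat),
    legal_history h -> legal_I h m ->
    let f := sf s h m in
    let p := sp s h m f n in
    partial_iso M N p /\
    (forall a b, prev_pi s h a b -> p a b) /\
    covers (iA m) f n p.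

End Game.

(* II has a winning strategy in EF^{1,c,beta}_kappa(M,N), kappa = |K|:
   for every cardinal theta < kappa chosen by I (represented by a subset of K
   of cardinality < |K|), II has a winning strategy in EF^{1,c,beta}_{<=theta}. *)
Definition II_wins_EF {Sym : Type} {ar : Sym -> nat} (K : Type)
  (W : Type) (ltW : W -> W -> Prop) (beta : W) (M N : structure Sym ar) : Prop :=
  forall Theta : K -> Prop, card_lt {x : K | Theta x} K ->
    exists s : IIStrategy M N W, winning_le_theta M N W ltW beta K Theta s.

From Stdlib Require Import Wellfounded List Cantor.
From Stdlib Require Import ClassicalEpsilon ProofIrrelevance.

(* II wins EF(M,P) by playing EF(M,N) and EF(N,P) side by side and answering
   with the composite of the two partial isomorphisms.  The only difficulty is
   the colouring: II must commit to f : A -> omega before I picks n, whereas the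
   set that I is made to play in the second game depends on the colour class
   chosen in the first.  So II colours a in A by the Cantor pair
   <f1 a, g_k b>, where k = f1 a, g_k is the colouring the second strategy gives
   to the image B_k of the k-th colour class under pi1, and b is a partner of a;
   a pair n = <k, j> then determines both auxiliary rounds.  Images of sets of
   size <= theta under partial isomorphisms have size <= theta, so those rounds
   are legal.  The argument works for each theta separately. *)

#[local] Arguments Build_IMove {Sym ar M N W}.
#[local] Arguments ib {Sym ar M N W}.
#[local] Arguments iA {Sym ar M N W}.
#[local] Arguments Adom {Sym ar M N}.
#[local] Arguments sf {Sym ar M N W}.
#[local] Arguments sp {Sym ar M N W}.
#[local] Arguments prev_beta {Sym ar M N W}.
#[local] Arguments prev_pi {Sym ar M N W}.
#[local] Arguments legal_I {Sym ar M N W}.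
#[local] Arguments legal_history {Sym ar M N W}.
#[local] Arguments covers {Sym ar M N}.

Lemma card_le_functional_image {X Y T : Type} (A : X -> Prop) (B : Y -> Prop)
    (p : X -> Y -> Prop) :
  (forall y, B y -> exists x, A x /\ p x y) ->
  (forall x y y', p x y -> p x y' -> y = y') ->
  card_le {x | A x} T -> card_le {y | B y} T.
Proof.
  intros HB Hfun [g Hg].
  pose (pre := fun y : {y | B y} =>
    let e := constructive_indefinite_description _ (HB (proj1_sig y) (proj2_sig y)) in
    exist A (proj1_sig e) (proj1 (proj2_sig e))).
  exists (fun y => g (pre y)).
  intros [y Hy] [y' Hy'] E. apply Hg in E. unfold pre in E. simpl in E.
  destruct (constructive_indefinite_description _ (HB y Hy)) as [x [Ax Hxy]].
  destruct (constructive_indefinite_description _ (HB y' Hy')) as [x' [Ax' Hxy']].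
  simpl in E. injection E as Ex. subst x'.
  assert (y = y') as <- by eauto.
  f_equal. apply proof_irrelevance.
Qed.

Definition rel_comp {X Y Z : Type} (p : X -> Y -> Prop) (q : Y -> Z -> Prop) : X -> Z -> Prop :=
  fun x z => exists y, p x y /\ q y z.

Lemma partial_iso_comp {Sym : Type} {ar : Sym -> nat} {M N P : structure Sym ar}
    {p : M -> N -> Prop} {q : N -> P -> Prop} :
  partial_iso M N p -> partial_iso N P q -> partial_iso M P (rel_comp p q).
Proof.
  intros [Fp [Ip Rp]] [Fq [Iq Rq]]. split; [|split].
  - intros a c c' [b [Hb Hc]] [b' [Hb' Hc']].
    assert (b = b') as <- by eauto. eauto.
  - intros a a' c [b [Hb Hc]] [b' [Hb' Hc']].
    assert (b = b') as <- by eauto. eauto.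
  - intros s a c Hac.
    pose (b := fun i => proj1_sig (constructive_indefinite_description _ (Hac i))).
    assert (Hb : forall i, p (a i) (b i) /\ q (b i) (c i)).
    { intro i. unfold b. destruct (constructive_indefinite_description _ (Hac i)); auto. }
    rewrite (Rp s a b (fun i => proj1 (Hb i))).
    apply (Rq s b c (fun i => proj2 (Hb i))).
Qed.

Section PairedColouring.
Variables (X Y : Type) (A : X -> Prop) (f : {x | A x} -> nat) (p : nat -> X -> Y -> Prop).

Definition image_class (k : nat) : Y -> Prop :=
  fun y => exists x : {x | A x}, f x = k /\ p k (proj1_sig x) y.

Variable g : forall k, {y | image_class k y} -> nat.

(* The second component is junk (0) when x has no partner under p (f x). *)
Definition paired_colouring (x : {x | A x}) : nat :=
  let k := f x in
  to_nat (k,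
    match excluded_middle_informative
      (exists y : {y | image_class k y}, p k (proj1_sig x) (proj1_sig y)) with
    | left H => g k (proj1_sig (constructive_indefinite_description _ H))
    | right _ => 0
    end).

Lemma paired_colouring_inv (x : {x | A x}) (n : nat) :
  paired_colouring x = n ->
  f x = fst (of_nat n) /\
  ((exists y, p (fst (of_nat n)) (proj1_sig x) y) ->
   exists y : {y | image_class (fst (of_nat n)) y},
     p (fst (of_nat n)) (proj1_sig x) (proj1_sig y) /\ g (fst (of_nat n)) y = snd (of_nat n)).
Proof.
  intros <-. unfold paired_colouring. rewrite cancel_of_to. simpl. split; [reflexivity|].
  intros [y Hy].
  destruct (excluded_middle_informative _) as [Hx|Hx].
  - destruct (constructive_indefinite_description _ Hx) as [y' Hy']. eauto.
  - exfalso. apply Hx. unshelve eexists (exist _ y _); [|exact Hy].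
    exists x. split; [reflexivity|exact Hy].
Qed.

End PairedColouring.

Arguments image_class {X Y A} f p k.
Arguments paired_colouring {X Y A} f p g.
Arguments paired_colouring_inv {X Y A f p g x n}.

Lemma winning_last_round {Sym : Type} {ar : Sym -> nat} {M N : structure Sym ar}
    {W : Type} {ltW : W -> W -> Prop} {beta : W} {K : Type} {Theta : K -> Prop}
    {s : IIStrategy M N W} :
  winning_le_theta M N W ltW beta K Theta s ->
  forall (r : IRound M N W) (h : list (IRound M N W)),
    legal_history ltW beta K Theta (r :: h) ->
    partial_iso M N (prev_pi s (r :: h)) /\
    (forall a b, prev_pi s h a b -> prev_pi s (r :: h) a b) /\
    covers (iA (fst r)) (sf s h (fst r)) (snd r) (prev_pi s (r :: h)).
Proof. intros Hs [m n] h [Hh Hm]. exact (Hs h m n Hh Hm). Qed.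

Section Composition.
Context {Sym : Type} {ar : Sym -> nat} (M N P : structure Sym ar).
Context (W : Type) (ltW : W -> W -> Prop) (beta : W) (K : Type) (Theta : K -> Prop).
Context (s1 : IIStrategy M N W) (s2 : IIStrategy N P W).
Hypothesis s1_wins : winning_le_theta M N W ltW beta K Theta s1.
Hypothesis s2_wins : winning_le_theta N P W ltW beta K Theta s2.

Definition moveM (w : W) (A : M -> Prop) : IMove M N W := Build_IMove w (inl A).
Definition answerM h1 w A (k : nat) : M -> N -> Prop :=
  sp s1 h1 (moveM w A) (sf s1 h1 (moveM w A)) k.
Definition relayM h1 w A (k : nat) : IMove N P W :=
  Build_IMove w (inl (image_class (sf s1 h1 (moveM w A)) (answerM h1 w A) k)).

Definition moveP (w : W) (C : P -> Prop) : IMove N P W := Build_IMove w (inr C).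
Definition answerP h2 w C (k : nat) : N -> P -> Prop :=
  sp s2 h2 (moveP w C) (sf s2 h2 (moveP w C)) k.
Definition answerP_inv h2 w C (k : nat) : P -> N -> Prop :=
  fun c b => answerP h2 w C k b c.
Definition relayP h2 w C (k : nat) : IMove M N W :=
  Build_IMove w (inr (image_class (sf s2 h2 (moveP w C)) (answerP_inv h2 w C) k)).

Definition split_round (h1 : list (IRound M N W)) (h2 : list (IRound N P W))
    (m : IMove M P W) (n : nat) : IRound M N W * IRound N P W :=
  match iA m with
  | inl A => ((moveM (ib m) A, fst (of_nat n)),
              (relayM h1 (ib m) A (fst (of_nat n)), snd (of_nat n)))
  | inr C => ((relayP h2 (ib m) C (fst (of_nat n)), snd (of_nat n)),
              (moveP (ib m) C, fst (of_nat n)))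
  end.

Fixpoint split_history (h : list (IRound M P W)) : list (IRound M N W) * list (IRound N P W) :=
  match h with
  | nil => (nil, nil)
  | (m, n) :: h' =>
      let r := split_round (fst (split_history h')) (snd (split_history h')) m n in
      (fst r :: fst (split_history h'), snd r :: snd (split_history h'))
  end.

Definition comp_colouring (h : list (IRound M P W)) (m : IMove M P W) : Adom (iA m) -> nat :=
  let h1 := fst (split_history h) in
  let h2 := snd (split_history h) in
  match iA m as A return Adom A -> nat with
  | inl A => paired_colouring (sf s1 h1 (moveM (ib m) A)) (answerM h1 (ib m) A)
               (fun k => sf s2 h2 (relayM h1 (ib m) A k))
  | inr C => paired_colouring (sf s2 h2 (moveP (ib m) C)) (answerP_inv h2 (ib m) C)
               (fun k => sf s1 h1 (relayP h2 (ib m) C k))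
  end.

Definition comp_answer (h : list (IRound M P W)) (m : IMove M P W)
    (_ : Adom (iA m) -> nat) (n : nat) : M -> P -> Prop :=
  rel_comp (prev_pi s1 (fst (split_history ((m, n) :: h))))
           (prev_pi s2 (snd (split_history ((m, n) :: h)))).

Definition comp_strategy : IIStrategy M P W := Build_IIStrategy M P W comp_colouring comp_answer.

Lemma prev_pi_comp_strategy h a c :
  prev_pi comp_strategy h a c ->
  rel_comp (prev_pi s1 (fst (split_history h))) (prev_pi s2 (snd (split_history h))) a c.
Proof. destruct h as [|[m n] h]; simpl; [contradiction | exact id]. Qed.

Lemma prev_beta_split_history h :
  prev_beta beta (fst (split_history h)) = prev_beta beta h /\
  prev_beta beta (snd (split_history h)) = prev_beta beta h.
Proof. destruct h as [|[[w [A|C]] n] h]; split; reflexivity. Qed.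

Lemma legal_split_history h :
  legal_history ltW beta K Theta h ->
  legal_history ltW beta K Theta (fst (split_history h)) /\
  legal_history ltW beta K Theta (snd (split_history h)).
Proof.
  induction h as [|[m n] h IH]; simpl; auto.
  intros [Hh [Hlt Hcard]]. destruct (IH Hh) as [H1 H2].
  destruct (prev_beta_split_history h) as [E1 E2].
  destruct m as [w [A|C]]; simpl in *.
  - assert (L1 : legal_I ltW beta K Theta (fst (split_history h)) (moveM w A)).
    { split; [rewrite E1|]; assumption. }
    destruct (s1_wins _ _ (fst (of_nat n)) H1 L1) as [[Hfun _] _].
    refine (conj (conj H1 L1) (conj H2 (conj _ _))); [rewrite E2; exact Hlt|].
    apply (card_le_functional_image A _ (answerM (fst (split_history h)) w A (fst (of_nat n))));
      [intros b [[a Ha] [_ Hab]]; eauto | exact Hfun | exact Hcard].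
  - assert (L2 : legal_I ltW beta K Theta (snd (split_history h)) (moveP w C)).
    { split; [rewrite E2|]; assumption. }
    destruct (s2_wins _ _ (fst (of_nat n)) H2 L2) as [[_ [Hinj _]] _].
    refine (conj (conj H1 (conj _ _)) (conj H2 L2)); [rewrite E1; exact Hlt|].
    apply (card_le_functional_image C _ (answerP_inv (snd (split_history h)) w C (fst (of_nat n))));
      [intros b [[c Hc] [_ Hcb]]; eauto | intros c b b' Hb Hb'; exact (Hinj _ _ _ Hb Hb') | exact Hcard].
Qed.

Lemma comp_strategy_wins : winning_le_theta M P W ltW beta K Theta comp_strategy.
Proof.
  intros h m n Hh Hm. cbv zeta.
  destruct (legal_split_history ((m, n) :: h) (conj Hh Hm)) as [L1 L2].
  destruct (winning_last_round s1_wins _ _ L1) as [Iso1 [Ext1 Cov1]].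
  destruct (winning_last_round s2_wins _ _ L2) as [Iso2 [Ext2 Cov2]].
  split; [exact (partial_iso_comp Iso1 Iso2)|split].
  { intros a c Hac. destruct (prev_pi_comp_strategy h a c Hac) as [b [Hab Hbc]].
    exists b. split; [apply Ext1 | apply Ext2]; assumption. }
  destruct m as [w [A|C]]; simpl in Cov1, Cov2 |- *.
  - intros a Ha Hcol.
    destruct (paired_colouring_inv Hcol) as [Ek Hpartner].
    destruct (Hpartner (Cov1 a Ha Ek)) as [[b Hb] [Hab Hj]].
    destruct (Cov2 b Hb Hj) as [c Hbc].
    exists c, b. split; assumption.
  - intros c Hc Hcol.
    destruct (paired_colouring_inv Hcol) as [Ek Hpartner].
    destruct (Hpartner (Cov2 c Hc Ek)) as [[b Hb] [Hbc Hj]].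
    destruct (Cov1 b Hb Hj) as [a Hab].
    exists a, b. split; assumption.
Qed.

End Composition.

Theorem mainTheorem3 :
  forall (K : Type) (ltK : K -> K -> Prop) (wfK : well_founded ltK),
    initial_well_order K ltK ->
    card_eq K (beth_top K ltK wfK) ->
  forall (Sym : Type) (ar : Sym -> nat),
    card_lt Sym K ->
  forall (W : Type) (ltW : W -> W -> Prop),
    well_order W ltW ->
  forall (beta : W) (M N P : structure Sym ar),
    II_wins_EF K W ltW beta M N ->
    II_wins_EF K W ltW beta N P ->
    II_wins_EF K W ltW beta M P.
Proof.
  intros K ltK wfK _ _ Sym ar _ W ltW _ beta M N P HMN HNP Theta Htheta.
  destruct (HMN Theta Htheta) as [s1 Hs1].
  destruct (HNP Theta Htheta) as [s2 Hs2].
  exists (comp_strategy M N P W s1 s2).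
  exact (comp_strategy_wins M N P W ltW beta K Theta s1 s2 Hs1 Hs2).
Qed.
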